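(* Let $n\ge 1$ be an integer and suppose that $A\subseteq\mathbb{Z}_5^n$ is sum-free. If $|A|>\frac32\cdot5^{n-1}$ and $A$ is contained in a union of two cosets of a proper subgroup $H<\mathbb{Z}_5^n$, then there is an element $e\notin H$ such that $A\subseteq(e+H)\cup(-e+H)$.
   Context: $\mathbb{Z}_5^n$ denotes the elementary abelian $5$-group of rank $n$. A subset $S$ of an abelian group is sum-free if there are no $x,y,z\in S$ (not necessarily distinct) with $x+y=z$. *)

From mathcomp Require Import all_boot all_order all_algebra.
Set Implicit Arguments. Unset Strict Implicit. Unset Printing Implicit Defensive.
Import GRing.Theory.
Local Open Scope ring_scope.

Notation Z5n n := 'rV['Z_5]_n.

Definition sum_free (n : nat) (S : {set Z5n n}) : Prop :=
  forall x y z, x \in S -> y \in S -> z \in S -> x + y != z.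

Definition is_subgroup (n : nat) (H : {set Z5n n}) : Prop :=
  0 \in H /\ (forall x y, x \in H -> y \in H -> x - y \in H).

Definition coset (n : nat) (e : Z5n n) (H : {set Z5n n}) : {set Z5n n} :=
  [set e + h | h in H].

From mathcomp Require Import all_boot all_order all_algebra.
From mathcomp Require Import zify.
Set Implicit Arguments. Unset Strict Implicit. Unset Printing Implicit Defensive.
Import GRing.Theory.
Local Open Scope ring_scope.

(* Since [H] is proper, it has index at least 5, so each of the two parts
   [A_a = A ∩ (a + H)] and [A_b = A ∩ (b + H)] has more than [|H|/2] elements.
   For [x, y, z] in [{a, b}] with [x + y - z ∈ H], any [u ∈ A_x] makes [u + A_y]
   and [A_z] two subsets of [z + H] of total size above [|H|], so they meet and
   [A] is not sum-free.  Hence [a, b, 2a - b, 2b - a ∉ H]; moreover [b - a ∉ H],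
   since otherwise [A] lies in one coset.  If also [b + a ∉ H], then
   [b + k a ∉ H] for every [k], so [a] and [b] span 25 cosets of [H], and
   [25 |H| ≤ 5^n] contradicts [3 · 5^(n-1) < 2 |A| ≤ 4 |H|].  Thus
   [b + H = -a + H]. *)

Lemma leq_card_subsetU (T : finType) (A B C : {set T}) :
  A \subset B :|: C -> (#|A| <= #|A :&: B| + #|A :&: C|)%N.
Proof.
move=> sABC; apply: leq_trans (leq_card_setU _ _); apply: subset_leq_card.
by rewrite -setIUr subsetI subxx sABC.
Qed.

Lemma Z5_unit (c : 'Z_5) : c != 0 -> c \is a GRing.unit.
Proof. by case: c => -[|[|[|[|[|]]]]]. Qed.

Lemma Z5_cases (P : 'Z_5 -> Prop) :
  P 0 -> P 1 -> P 2%:R -> P 3%:R -> P 4%:R -> forall c, P c.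
Proof.
move=> P0 P1 P2 P3 P4 [[|[|[|[|[|k]]]]] lt_k5] //.
- by rewrite (_ : Ordinal _ = 0) //; apply/val_inj.
- by rewrite (_ : Ordinal _ = 1) //; apply/val_inj.
- by rewrite (_ : Ordinal _ = 2%:R) //; apply/val_inj.
- by rewrite (_ : Ordinal _ = 3%:R) //; apply/val_inj.
- by rewrite (_ : Ordinal _ = 4%:R) //; apply/val_inj.
Qed.

Lemma card_Z5n n : #|{: Z5n n}| = (5 ^ n)%N.
Proof. by rewrite card_mx card_ord mul1n. Qed.

Section SubgroupCosets.

Variables (n : nat) (H : {set Z5n n}).
Hypothesis subH : is_subgroup H.

Lemma subgroup0 : 0 \in H. Proof. by case: subH. Qed.

Lemma subgroupB x y : x \in H -> y \in H -> x - y \in H.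
Proof. by case: subH => _; apply. Qed.

Lemma subgroupN x : x \in H -> - x \in H.
Proof. by move=> Hx; rewrite -sub0r subgroupB // subgroup0. Qed.

Lemma subgroupD x y : x \in H -> y \in H -> x + y \in H.
Proof. by move=> Hx Hy; rewrite -[y]opprK subgroupB // subgroupN. Qed.

Lemma subgroupMn x k : x \in H -> x *+ k \in H.
Proof.
by move=> Hx; elim: k => [|k IHk]; rewrite ?mulr0n ?subgroup0 // mulrS subgroupD.
Qed.

Lemma subgroupZ (c : 'Z_5) x : x \in H -> c *: x \in H.
Proof. by move=> Hx; rewrite -[c]natr_Zp scaler_nat subgroupMn. Qed.

Lemma subgroupZ_eq (c : 'Z_5) x : c != 0 -> (c *: x \in H) = (x \in H).
Proof.
move=> /Z5_unit c_unit; apply/idP/idP; last exact: subgroupZ.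
by move=> /(subgroupZ c^-1); rewrite scalerA mulVr // scale1r.
Qed.

Lemma scale_subgroup_inj g (i j : 'Z_5) :
  g \notin H -> (i - j) *: g \in H -> i = j.
Proof.
move=> gH; apply: contraTeq; rewrite -subr_eq0 => nz_ij.
by rewrite subgroupZ_eq.
Qed.

Lemma mem_coset c y : (y \in coset c H) = (y - c \in H).
Proof.
apply/imsetP/idP => [[h Hh ->]|Hy]; first by rewrite addrC addKr.
by exists (y - c) => //; rewrite addrC subrK.
Qed.

Lemma coset_eq x y : x - y \in H -> coset x H = coset y H.
Proof.
move=> xyH; apply/setP => z; rewrite !mem_coset.
apply/idP/idP => [zxH|zyH].
- by rewrite -(subrKA x) subgroupD.
- by rewrite -(subrKA y) -[y - x]opprB subgroupB.
Qed.

Lemma card_coset c : #|coset c H| = #|H|.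
Proof. by rewrite card_imset //; apply: addrI. Qed.

Lemma subset_coset_meet c (X Y : {set Z5n n}) :
  X \subset coset c H -> Y \subset coset c H -> (#|H| < #|X| + #|Y|)%N ->
  X :&: Y != set0.
Proof.
move=> sXc sYc ltH; apply: contraTneq ltH => XY0; rewrite -leqNgt.
by rewrite -cardsUI XY0 cards0 addn0 -(card_coset c) subset_leq_card // subUset sXc.
Qed.

Lemma card_setI_coset (A : {set Z5n n}) c : (#|A :&: coset c H| <= #|H|)%N.
Proof. by rewrite -(card_coset c) subset_leq_card // subsetIr. Qed.

Lemma sum_free_large_cosets (A : {set Z5n n}) x y z :
  sum_free A ->
  (#|H| < 2 * #|A :&: coset x H|)%N -> (#|H| < 2 * #|A :&: coset y H|)%N ->
  (#|H| < 2 * #|A :&: coset z H|)%N -> x + y - z \notin H.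
Proof.
move=> sfA ltx lty ltz; apply/negP => xyzH.
have /set0Pn[u /setIP[uA uxH]] : A :&: coset x H != set0.
  by rewrite -card_gt0; lia.
pose U := [set u + v | v in A :&: coset y H].
have sUz : U \subset coset z H.
  apply/subsetP => _ /imsetP[v /setIP[_ vyH] ->].
  move: uxH vyH; rewrite !mem_coset => uxH vyH.
  have -> : u + v - z = (u - x) + (v - y) + (x + y - z).
    by rewrite [(u - x) + _]addrACA -opprD addrA subrK.
  by rewrite subgroupD // subgroupD.
have sAz : A :&: coset z H \subset coset z H by apply: subsetIr.
have ltU : (#|H| < #|U| + #|A :&: coset z H|)%N.
  have ltyz : (#|H| < #|A :&: coset y H| + #|A :&: coset z H|)%N by lia.
  by rewrite card_imset //; apply: addrI.
have /set0Pn[_ /setIP[/imsetP[v /setIP[vA _] ->] /setIP[uvA _]]] :=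
  subset_coset_meet sUz sAz ltU.
by have := sfA u v (u + v) uA vA uvA; rewrite eqxx.
Qed.

Lemma card_distinct_cosets (I : finType) (c : I -> Z5n n) :
  (forall i j, c i - c j \in H -> i = j) -> (#|I| * #|H| <= 5 ^ n)%N.
Proof.
move=> c_inj; pose f (p : I * Z5n n) := c p.1 + p.2.
have f_inj : {in setX [set: I] H &, injective f}.
  move=> [i x] [j y]; rewrite !inE /f /= => Hx Hy cxy.
  have cij : c i - c j = y - x.
    by apply/eqP; rewrite subr_eq addrAC [y + _]addrC -cxy addrK.
  have eij : i = j by apply: c_inj; rewrite cij subgroupB.
  by subst j; congr (_, _); apply: (addrI (c i)).
by rewrite -cardsT -cardsX -(card_in_imset f_inj) -card_Z5n max_card.
Qed.

Lemma subgroup_index5 g : g \notin H -> (5 * #|H| <= 5 ^ n)%N.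
Proof.
move=> gH; have := @card_distinct_cosets _ (fun i : 'Z_5 => i *: g).
by rewrite card_ord; apply=> i j; rewrite -scalerBl; apply: scale_subgroup_inj.
Qed.

Lemma subgroup_index25 a b :
  a \notin H -> (forall k : 'Z_5, b + k *: a \notin H) ->
  (25 * #|H| <= 5 ^ n)%N.
Proof.
move=> aH baH; pose c (p : 'Z_5 * 'Z_5) := p.1 *: a + p.2 *: b.
have := @card_distinct_cosets _ c; rewrite card_prod card_ord; apply.
move=> [i j] [i' j']; rewrite /c /= opprD addrACA -!scalerBl.
have [<-|nz_j] := eqVneq j j' => cH.
  by rewrite subrr scale0r addr0 in cH; rewrite (scale_subgroup_inj aH cH).
have nz_jj' : j - j' != 0 by rewrite subr_eq0.
have /negP[] := baH ((j - j')^-1 * (i - i')).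
rewrite -(subgroupZ_eq _ nz_jj') scalerDr !scalerA mulrA divrr ?Z5_unit //.
by rewrite mul1r addrC.
Qed.

Lemma addr_scale_notin_subgroup a b :
  b \notin H -> a + a - b \notin H -> b + b - a \notin H ->
  b - a \notin H -> b + a \notin H -> forall k : 'Z_5, b + k *: a \notin H.
Proof.
move=> bH aabH bbaH b_aH baH; elim/Z5_cases.
- by rewrite scale0r addr0.
- by rewrite scale1r.
- apply: contra bbaH => /(subgroupZ 2%:R).
  rewrite scalerDr scalerA (_ : 2%:R * 2%:R = -1); last exact/val_inj.
  by rewrite scaleN1r scaler_nat mulr2n.
- apply: contra aabH => /subgroupN.
  rewrite (_ : 3%:R = - 2%:R); last exact/val_inj.
  by rewrite scaleNr scaler_nat mulr2n opprB.
- by rewrite (_ : 4%:R = -1) ?scaleN1r //; apply/val_inj.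
Qed.

End SubgroupCosets.

Theorem lemma1 (n : nat) (A : {set 'rV['Z_5]_n}) :
  (0 < n)%N ->
  sum_free A ->
  (3 * 5 ^ n.-1 < 2 * #|A|)%N ->
  forall H : {set 'rV['Z_5]_n},
    is_subgroup H -> H != [set: 'rV['Z_5]_n] ->
    (exists a b : 'rV['Z_5]_n, A \subset coset a H :|: coset b H) ->
    exists e : 'rV['Z_5]_n, e \notin H /\ A \subset coset e H :|: coset (- e) H.
Proof.
move=> n_gt0 sfA bigA H subH H_proper [a [b sAab]].
have pow5 : (5 ^ n = 5 * 5 ^ n.-1)%N by rewrite -{1}(prednK n_gt0) expnS.
have /subsetPn[g _ gH] : ~~ ([set: Z5n n] \subset H) by rewrite subTset.
have le5H := subgroup_index5 subH gH.
have leA := leq_card_subsetU sAab.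
have leAa := card_setI_coset H A a; have leAb := card_setI_coset H A b.
have ltHA : (#|H| < #|A|)%N by lia.
have ltH25 : (5 ^ n < 25 * #|H|)%N by lia.
have ltAa : (#|H| < 2 * #|A :&: coset a H|)%N by lia.
have ltAb : (#|H| < 2 * #|A :&: coset b H|)%N by lia.
have aH : a \notin H.
  by have := sum_free_large_cosets subH sfA ltAa ltAa ltAa; rewrite addrK.
have bH : b \notin H.
  by have := sum_free_large_cosets subH sfA ltAb ltAb ltAb; rewrite addrK.
have aabH := sum_free_large_cosets subH sfA ltAa ltAa ltAb.
have bbaH := sum_free_large_cosets subH sfA ltAb ltAb ltAa.
have b_aH : b - a \notin H.
  apply: contraTN ltHA => /(coset_eq subH) eq_ba; rewrite -leqNgt.
  rewrite eq_ba setUid in sAab.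
  by rewrite -(card_coset H a) subset_leq_card.
have [baH|baH] := boolP (b + a \in H).
  exists a; split=> //.
  by rewrite -(coset_eq subH (x := b) (y := - a)) ?opprK.
have := subgroup_index25 subH aH (addr_scale_notin_subgroup subH bH aabH bbaH b_aH baH).
by rewrite leqNgt ltH25.
Qed.
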